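(* Let $\Delta$ be an alphabet, $\zeta:\Sigma\to 2^{\mathsf{SP}(\Delta)}$ an atomic substitution, and $L,L'\subseteq\Sigma^*$. Then $\zeta(L\cap L')=\zeta(L)\cap\zeta(L')$, $\zeta(L\setminus L')=\zeta(L)\setminus\zeta(L')$, and $\zeta(L)=\emptyset$ if and only if $L=\emptyset$.
   Context: Pomsets over an alphabet are isomorphism classes of finite labelled posets; $1$ is the empty pomset; $U\cdot V$ is the disjoint union with all elements of $U$ below all elements of $V$; $U\parallel V$ is the disjoint union of orders; these lift pointwise to sets of pomsets. $\mathsf{SP}(\Delta)$ is the smallest set containing $1$ and the one-element pomsets over $\Delta$, closed under $\cdot,\parallel$. Words over $\Sigma$ are identified with pomsets built from one-element pomsets using only $\cdot$; $\Sigma^*$ is the set of words. A substitution $\zeta:\Sigma\to 2^{\mathsf{SP}(\Delta)}$ is extended by $\zeta(1)=\{1\}$, $\zeta(U\cdot V)=\zeta(U)\cdot\zeta(V)$, $\zeta(U\parallel V)=\zeta(U)\parallel\zeta(V)$, and to languages by $\zeta(L)=\bigcup_{U\in L}\zeta(U)$. A pomset $U$ is a sequential prime if it is non-empty and $U=V\cdot W$ implies $V=1$ or $W=1$. $\zeta$ is atomic if (i) for each $a\in\Sigma$, $\zeta(a)$ consists only of sequential primes, and (ii) for $a,b\in\Sigma$, $\zeta(a)\cap\zeta(b)\ne\emptyset$ iff $a=b$. *)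

From mathcomp Require Import all_boot.

Set Implicit Arguments. Unset Strict Implicit. Unset Printing Implicit Defensive.

(* Pomsets are isomorphism classes of these; we work with
   representatives and always reason up to [iso]. *)
Record lposet (D : Type) := LPoset {
  lp_n : nat;
  lp_lab : 'I_lp_n -> D;
  lp_le : rel 'I_lp_n;
  lp_refl : reflexive lp_le;
  lp_anti : antisymmetric lp_le;
  lp_trans : transitive lp_le }.
Arguments lp_n {D} l.
Arguments lp_lab {D} l _.
Arguments lp_le {D} l _ _.
Arguments lp_refl {D} l _.
Arguments lp_anti {D} l _ _ _.
Arguments lp_trans {D} l _ _ _ _ _.

Section Pomsets.
Variable D : Type.

Definition iso (U V : lposet D) : Prop :=
  exists f : 'I_(lp_n U) -> 'I_(lp_n V),
    [/\ bijective f,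
        (forall x, lp_lab V (f x) = lp_lab U x) &
        (forall x y, lp_le V (f x) (f y) = lp_le U x y)].

Definition ord0_elim (T : Type) (i : 'I_0) : T :=
  match (fun e : true = false => match e in _ = b return if b then True else False with erefl => I end) (etrans (esym (ltn_ord i)) (ltn0 i)) with end.

Definition lone : lposet D :=
  @LPoset D 0 (@ord0_elim D) (fun _ _ => true)
    (fun _ => erefl) (fun x _ _ => @ord0_elim _ x)
    (fun _ _ _ _ _ => erefl).

Definition lsingle (d : D) : lposet D :=
  @LPoset D 1 (fun _ => d) (fun _ _ => true)
    (fun _ => erefl)
    (fun x y _ => etrans (ord1 x) (esym (ord1 y)))
    (fun _ _ _ _ _ => erefl).

Section Comp.
Variables U V : lposet D.
Let m := lp_n U.
Let n := lp_n V.

Definition comp_lab (i : 'I_(m + n)) : D :=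
  match split i with inl a => lp_lab U a | inr b => lp_lab V b end.

Definition comp_le (b : bool) (i j : 'I_(m + n)) : bool :=
  match split i, split j with
  | inl a, inl a' => lp_le U a a'
  | inr c, inr c' => lp_le V c c'
  | inl _, inr _ => b
  | inr _, inl _ => false
  end.

Lemma comp_le_refl b : reflexive (comp_le b).
Proof. by move=> x; rewrite /comp_le; case: (split x) => a; apply: lp_refl. Qed.

Lemma comp_le_anti b : antisymmetric (comp_le b).
Proof.
move=> x y; rewrite -(splitK x) -(splitK y) /comp_le !unsplitK.
case: (split x) => a; case: (split y) => c //=; try by rewrite andbF.
- by move/lp_anti => ->.
- by move/lp_anti => ->.
Qed.

Lemma comp_le_trans b : transitive (comp_le b).
Proof.
move=> y x z; rewrite -(splitK x) -(splitK y) -(splitK z) /comp_le !unsplitK.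
case: (split x) => a; case: (split y) => c; case: (split z) => e //=;
  try exact: lp_trans.
Qed.

Definition lcomp (b : bool) : lposet D :=
  @LPoset D (m + n) comp_lab (comp_le b) (@comp_le_refl b)
    (@comp_le_anti b) (@comp_le_trans b).
End Comp.

Definition lseq (U V : lposet D) : lposet D := lcomp U V true.
Definition lpar (U V : lposet D) : lposet D := lcomp U V false.

(* Sets of pomsets are represented by isomorphism-closed predicates on
   labelled posets. *)
Definition pset := lposet D -> Prop.
Definition iso_closed (A : pset) : Prop :=
  forall U V, iso U V -> A U -> A V.

Definition pone : pset := fun U => iso U lone.
Definition pseqs (A B : pset) : pset :=
  fun U => exists V W, [/\ A V, B W & iso U (lseq V W)].

Inductive sp_term :=
| SP1 | SPatom of D | SPseq of sp_term & sp_term | SPpar of sp_term & sp_term.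

Fixpoint sp_interp (t : sp_term) : lposet D :=
  match t with
  | SP1 => lone
  | SPatom d => lsingle d
  | SPseq t1 t2 => lseq (sp_interp t1) (sp_interp t2)
  | SPpar t1 t2 => lpar (sp_interp t1) (sp_interp t2)
  end.

Definition is_SP (U : lposet D) : Prop := exists t, iso U (sp_interp t).

Definition seq_prime (U : lposet D) : Prop :=
  0 < lp_n U /\
  forall V W : lposet D, iso U (lseq V W) -> iso V lone \/ iso W lone.
End Pomsets.

Section Subst.
Variables (S D : Type).

Definition is_subst (zeta : S -> pset D) : Prop :=
  forall a, iso_closed (zeta a) /\ (forall U, zeta a U -> is_SP U).

(* extension to words (words = pomsets built from letters by .) *)
Fixpoint zeta_word (zeta : S -> pset D) (w : seq S) : pset D :=
  match w with
  | [::] => @pone D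
  | a :: w' => pseqs (zeta a) (zeta_word zeta w')
  end.

Definition zeta_lang (zeta : S -> pset D) (L : seq S -> Prop) : pset D :=
  fun U => exists2 w, L w & zeta_word zeta w U.

Definition atomic (zeta : S -> pset D) : Prop :=
  (forall a U, zeta a U -> seq_prime U) /\
  (forall a b, (exists U, zeta a U /\ zeta b U) <-> a = b).
End Subst.

From mathcomp Require Import all_boot.
Set Implicit Arguments. Unset Strict Implicit. Unset Printing Implicit Defensive.

(* Everything rests on unique factorisation: if V1 . W1 ~ V2 . W2 with V1 and
   V2 sequential primes, then V1 ~ V2 and W1 ~ W2.  An isomorphism h puts the
   elements of V1 that it sends into V2 below those it sends into W2, so by
   primality of V1 either all or none of V1 lands in V2; "none" is impossible,
   since the preimage of a point of V2 would then lie in W1, above V1, while its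
   image lies below h(V1).  Hence zeta(w) and zeta(v) are disjoint for words
   w <> v, and zeta(w) is never empty because atomicity makes each zeta(a)
   non-empty; the three identities follow pointwise. *)

Lemma split_lshift m n (a : 'I_m) : split (lshift n a) = inl a.
Proof. exact: (unsplitK (inl _ a)). Qed.

Lemma split_rshift m n (b : 'I_n) : split (rshift m b) = inr b.
Proof. exact: (unsplitK (inr _ b)). Qed.


Section ShiftRestriction.
Variables m1 n1 m2 n2 : nat.
Implicit Types h : 'I_(m1 + n1) -> 'I_(m2 + n2).

Definition keeps_left h := forall a : 'I_m1, h (lshift n1 a) < m2.
Definition keeps_right h := forall b : 'I_n1, m2 <= h (rshift m1 b).

Definition lshift_restr h (h_l : keeps_left h) (a : 'I_m1) : 'I_m2 :=
  Ordinal (h_l a).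

Definition rshift_restr h (h_r : keeps_right h) (b : 'I_n1) : 'I_n2 :=
  Ordinal (split_subproof (h_r b)).

Lemma lshift_restrE h (h_l : keeps_left h) a :
  lshift n2 (lshift_restr h_l a) = h (lshift n1 a).
Proof. exact: val_inj. Qed.

Lemma rshift_restrE h (h_r : keeps_right h) b :
  rshift m2 (rshift_restr h_r b) = h (rshift m1 b).
Proof. by apply: val_inj; rewrite /= subnKC. Qed.

End ShiftRestriction.

Lemma can_keeps_right m1 n1 m2 n2 (h : 'I_(m1 + n1) -> 'I_(m2 + n2)) hinv :
  cancel h hinv -> keeps_left hinv -> keeps_right h.
Proof.
move=> hK hinv_l b; rewrite leqNgt; apply/negP => lt_hb.
have hb : h (rshift m1 b) = lshift n2 (Ordinal lt_hb) by apply: val_inj.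
by have := hinv_l (Ordinal lt_hb); rewrite -hb hK /= ltnNge leq_addr.
Qed.

Lemma lshift_restrK m1 n1 m2 n2 (h : 'I_(m1 + n1) -> 'I_(m2 + n2)) hinv
    (h_l : keeps_left h) (hinv_l : keeps_left hinv) :
  cancel h hinv -> cancel (lshift_restr h_l) (lshift_restr hinv_l).
Proof. by move=> hK a; apply: (@lshift_inj _ n1); rewrite !lshift_restrE hK. Qed.

Lemma rshift_restrK m1 n1 m2 n2 (h : 'I_(m1 + n1) -> 'I_(m2 + n2)) hinv
    (h_r : keeps_right h) (hinv_r : keeps_right hinv) :
  cancel h hinv -> cancel (rshift_restr h_r) (rshift_restr hinv_r).
Proof. by move=> hK b; apply: (@rshift_inj m1); rewrite !rshift_restrE hK. Qed.

Section Pomsets.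
Variable D : Type.
Implicit Types U V W : lposet D.

Lemma iso_refl U : iso U U.
Proof. by exists id; split => //; exists id. Qed.

Lemma iso_sym U V : iso U V -> iso V U.
Proof.
case=> f [[g fK gK] f_lab f_le]; exists g; split.
- by exists f.
- by move=> y; rewrite -f_lab gK.
- by move=> x y; rewrite -f_le !gK.
Qed.

Lemma iso_trans U V W : iso U V -> iso V W -> iso U W.
Proof.
case=> f [f_bij f_lab f_le] [g [g_bij g_lab g_le]]; exists (g \o f); split.
- exact: bij_comp.
- by move=> x /=; rewrite g_lab f_lab.
- by move=> x y /=; rewrite g_le f_le.
Qed.

Lemma iso_size U V : iso U V -> lp_n U = lp_n V.
Proof. by case=> f [/bij_eq_card + _ _]; rewrite !card_ord. Qed.

Lemma pone_iso_closed : iso_closed (@pone D).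
Proof. by move=> U V /iso_sym; apply: iso_trans. Qed.

Lemma pseqs_iso_closed (A B : pset D) : iso_closed (pseqs A B).
Proof.
move=> U U' UU' [V [W [AV BW UVW]]]; exists V, W; split => //.
exact: iso_trans (iso_sym UU') UVW.
Qed.

Lemma lseq_lab_lshift U V a : lp_lab (lseq U V) (lshift _ a) = lp_lab U a.
Proof. by rewrite /= /comp_lab split_lshift. Qed.

Lemma lseq_lab_rshift U V b : lp_lab (lseq U V) (rshift _ b) = lp_lab V b.
Proof. by rewrite /= /comp_lab split_rshift. Qed.

Lemma lseq_le_lshift U V a c :
  lp_le (lseq U V) (lshift _ a) (lshift _ c) = lp_le U a c.
Proof. by rewrite /= /comp_le !split_lshift. Qed.

Lemma lseq_le_rshift U V b d :
  lp_le (lseq U V) (rshift _ b) (rshift _ d) = lp_le V b d.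
Proof. by rewrite /= /comp_le !split_rshift. Qed.

Lemma lseq_le_lr U V (i j : 'I_(lp_n U + lp_n V)) :
  i < lp_n U -> lp_n U <= j -> lp_le (lseq U V) i j.
Proof.
move=> lt_i; rewrite leqNgt /= /comp_le.
by case: splitP lt_i => // a _ _; case: splitP.
Qed.

Lemma lseq_le_rl U V (i j : 'I_(lp_n U + lp_n V)) :
  lp_n U <= i -> j < lp_n U -> lp_le (lseq U V) i j = false.
Proof.
rewrite leqNgt /= /comp_le => ge_i.
by case: splitP ge_i => // a _ _; case: splitP.
Qed.

Section SubPoset.
Variables (U : lposet D) (P : pred 'I_(lp_n U)).

Definition lsub_le (i j : 'I_#|P|) := lp_le U (enum_val i) (enum_val j).

Lemma lsub_refl : reflexive lsub_le.
Proof. by move=> i; apply: lp_refl. Qed.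

Lemma lsub_anti : antisymmetric lsub_le.
Proof. by move=> i j /lp_anti /enum_val_inj. Qed.

Lemma lsub_trans : transitive lsub_le.
Proof. by move=> i j k; apply: lp_trans. Qed.

Definition lsub : lposet D :=
  LPoset (fun i => lp_lab U (enum_val i)) lsub_refl lsub_anti lsub_trans.

End SubPoset.

Lemma lseq_lsub_cut U (P : pred 'I_(lp_n U)) :
  (forall x y, P x -> ~~ P y -> lp_le U x y) ->
  iso (lseq (lsub P) (lsub (predC P))) U.
Proof.
move=> cut.
pose g (i : 'I_(#|P| + #|predC P|)) : 'I_(lp_n U) :=
  match split i with inl a => enum_val a | inr b => enum_val b end.
have g_inj : injective g.
  move=> i j; rewrite /g.
  case: (split_ordP i) => a ->; case: (split_ordP j) => c -> /=.
  - by move/enum_val_inj ->.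
  - by move=> ac; have /negP[] := enum_valP c; rewrite -ac; apply: enum_valP.
  - by move=> ac; have /negP[] := enum_valP a; rewrite ac; apply: enum_valP.
  - by move/enum_val_inj ->.
exists g; split.
- by apply: (inj_card_bij g_inj); rewrite !card_ord cardC card_ord.
- by move=> i; rewrite /= /comp_lab /g; case: (split i).
move=> i j; rewrite /= /comp_le /g; case: (split i) => a; case: (split j) => c //.
- by apply: cut; [exact: enum_valP | have := enum_valP c; rewrite inE].
apply/negbTE/negP => le_ac.
have Pc := enum_valP c; have le_ca := cut _ _ Pc (enum_valP a).
have /negP[] := enum_valP a.
by rewrite (lp_anti U _ _ (introT andP (conj le_ac le_ca))).
Qed.

Lemma seq_prime_cut U (P : pred 'I_(lp_n U)) :
  seq_prime U -> (forall x y, P x -> ~~ P y -> lp_le U x y) ->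
  (forall x, P x) \/ (forall x, ~~ P x).
Proof.
move=> [_ primeU] /lseq_lsub_cut /iso_sym /primeU [] /iso_size /= /card0_eq P0;
  [right | left] => x; have /negbT := P0 x.
- by [].
- exact: negbNE.
Qed.

Lemma lseq_prime_keeps_left V1 W1 V2 W2
    (h : 'I_(lp_n V1 + lp_n W1) -> 'I_(lp_n V2 + lp_n W2)) hinv :
  cancel hinv h ->
  {mono h : x y / lp_le (lseq V1 W1) x y >-> lp_le (lseq V2 W2) x y} ->
  seq_prime V1 -> 0 < lp_n V2 -> keeps_left h.
Proof.
move=> hinvK h_le primeV1 V2_gt0.
pose P a := h (lshift (lp_n W1) a) < lp_n V2.
have cut a c : P a -> ~~ P c -> lp_le V1 a c.
  rewrite /P => lt_a /negbTE ge_c; rewrite -(@lseq_le_lshift V1 W1) -h_le.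
  by apply: (lseq_le_lr lt_a); rewrite leqNgt ge_c.
have [h_l|none] := seq_prime_cut primeV1 cut; first exact: h_l.
pose c0 : 'I_(lp_n V2) := Ordinal V2_gt0.
have := hinvK (lshift (lp_n W2) c0).
have [a -> | b ->] := split_ordP (hinv (lshift (lp_n W2) c0)) => hx.
  by have := none a; rewrite /P hx => /negP[]; apply: (ltn_ord c0).
pose a0 : 'I_(lp_n V1) := Ordinal (proj1 primeV1).
have ge_ha0 : lp_n V2 <= h (lshift _ a0) by rewrite leqNgt; apply: none.
have lt_hb : h (rshift _ b) < lp_n V2 by rewrite hx; apply: (ltn_ord c0).
have := h_le (lshift _ a0) (rshift _ b).
rewrite lseq_le_rl // lseq_le_lr //; [exact: (ltn_ord a0) | exact: leq_addr].
Qed.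

Lemma lseq_prime_cancel V1 W1 V2 W2 : seq_prime V1 -> seq_prime V2 ->
  iso (lseq V1 W1) (lseq V2 W2) -> iso V1 V2 /\ iso W1 W2.
Proof.
move=> primeV1 primeV2 [h [[hinv hK hinvK] h_lab h_le]].
have h_l := lseq_prime_keeps_left hinvK h_le primeV1 (proj1 primeV2).
have hinv_l := lseq_prime_keeps_left hK (can_mono hinvK h_le) primeV2 (proj1 primeV1).
have h_r := can_keeps_right hK hinv_l.
have hinv_r := can_keeps_right hinvK h_l.
split.
- exists (lshift_restr h_l); split.
  + by exists (lshift_restr hinv_l); apply: lshift_restrK.
  + by move=> a; have := h_lab (lshift _ a); rewrite -lshift_restrE !lseq_lab_lshift.
  + move=> a c; have := h_le (lshift _ a) (lshift _ c).
    by rewrite -!(lshift_restrE h_l) !lseq_le_lshift.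
- exists (rshift_restr h_r); split.
  + by exists (rshift_restr hinv_r); apply: rshift_restrK.
  + by move=> b; have := h_lab (rshift _ b); rewrite -rshift_restrE !lseq_lab_rshift.
  + move=> b d; have := h_le (rshift _ b) (rshift _ d).
    by rewrite -!(rshift_restrE h_r) !lseq_le_rshift.
Qed.

End Pomsets.

Section Substitution.
Variables (S D : Type) (zeta : S -> pset D).

Lemma zeta_word_iso_closed w : iso_closed (zeta_word zeta w).
Proof. by case: w => [|a w]; [exact: pone_iso_closed | exact: pseqs_iso_closed]. Qed.

Hypothesis zeta_atomic : atomic zeta.

Lemma zeta_word_size_eq0 w U : zeta_word zeta w U -> (lp_n U == 0) = nilp w.
Proof.
case: w => [/iso_size -> // | a w [V [W [aV _ /iso_size ->]]]].
by have [V_gt0 _] := proj1 zeta_atomic a V aV; rewrite /= addn_eq0 eqn0Ngt V_gt0.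
Qed.

Lemma zeta_word_nonempty w : exists U, zeta_word zeta w U.
Proof.
elim: w => [|a w [W wW]]; first by exists (lone D); apply: iso_refl.
have [V [aV _]] := proj2 (proj2 zeta_atomic a a) erefl.
by exists (lseq V W), V, W; split => //; apply: iso_refl.
Qed.

Hypothesis zeta_subst : is_subst zeta.

Lemma zeta_word_inj w v U : zeta_word zeta w U -> zeta_word zeta v U -> w = v.
Proof.
elim: w v U => [|a w IH] [|b v] U wU vU //;
  try by have := zeta_word_size_eq0 wU; rewrite (zeta_word_size_eq0 vU).
case: wU => [V [W [aV wW UVW]]]; case: vU => [V' [W' [bV' vW' UVW']]].
have [VV' WW'] := lseq_prime_cancel (proj1 zeta_atomic a V aV)
  (proj1 zeta_atomic b V' bV') (iso_trans (iso_sym UVW) UVW').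
have -> : a = b.
  by apply/(proj2 zeta_atomic); exists V'; split; first exact: (proj1 (zeta_subst a) V).
by rewrite (IH v W' (zeta_word_iso_closed WW' wW) vW').
Qed.

End Substitution.

Theorem lemma3p12 (Sigma Delta : finType) (zeta : Sigma -> pset Delta)
  (L L' : seq Sigma -> Prop) :
  is_subst zeta -> atomic zeta ->
  [/\ (forall U, zeta_lang zeta (fun w => L w /\ L' w) U <->
                 (zeta_lang zeta L U /\ zeta_lang zeta L' U)),
      (forall U, zeta_lang zeta (fun w => L w /\ ~ L' w) U <->
                 (zeta_lang zeta L U /\ ~ zeta_lang zeta L' U)) &
      ((forall U, ~ zeta_lang zeta L U) <-> (forall w, ~ L w))].
Proof.
move=> zeta_subst zeta_atomic.
have inj := zeta_word_inj zeta_atomic zeta_subst.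
split=> [U | U | ].
- split=> [[w [Lw L'w] wU] | [[w Lw wU] [v L'v vU]]]; first by split; exists w.
  by rewrite -(inj _ _ _ wU vU) in L'v; exists w.
- split=> [[w [Lw nL'w] wU] | [[w Lw wU] nL'U]].
  + split; first by exists w.
    by case=> v L'v vU; apply: nL'w; rewrite (inj _ _ _ wU vU).
  + by exists w => //; split => // L'w; apply: nL'U; exists w.
- split=> [noU w Lw | noL U [w Lw _]]; last exact: noL Lw.
  have [U wU] := zeta_word_nonempty zeta_atomic w.
  by apply: (noU U); exists w.
Qed.
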